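(* Let $P\ll Q$ be probability measures on $(\mathcal X,\mathcal F)$, let $\gamma>1$, and let $f:(0,\infty)\to\mathbb R$ be convex with $f(1)=0$, differentiable at $1$ and $\gamma$, with $f'(\gamma)>f'(1)$. Then for every $E\in\mathcal F$, $$P(E)\le\gamma\,Q(E)+\frac{D_f(P\Vert Q)}{f'(\gamma)-f'(1)}.$$
   Context: For convex $f$ on $(0,\infty)$ extended by $f(0):=\lim_{t\downarrow0}f(t)$ and $P\ll Q$, $D_f(P\Vert Q):=\int f(\mathrm dP/\mathrm dQ)\,\mathrm dQ$. *)

From HB Require Import structures.
From mathcomp Require Import all_boot all_order all_algebra.
From mathcomp Require Import all_classical all_reals all_analysis.
Set Implicit Arguments. Unset Strict Implicit. Unset Printing Implicit Defensive.
Import Order.TTheory GRing.Theory Num.Theory.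
Import numFieldNormedType.Exports.
Local Open Scope classical_set_scope.
Local Open Scope ring_scope.
Local Open Scope charge_scope.

Definition f_at0 (R : realType) (f : R -> R) : \bar R :=
  lim ((f t)%:E @[t --> 0^'+]).

Definition f_ext (R : realType) (f : R -> R) (t : \bar R) : \bar R :=
  if (0 < t)%E then (f (fine t))%:E else f_at0 f.

Definition f_divergence d (T : measurableType d) (R : realType)
  (f : R -> R) (P Q : probability T R) : \bar R :=
  (\int[Q]_x f_ext f (('d (charge_of_finite_measure P) '/d Q) x))%E.

From HB Require Import structures.
From mathcomp Require Import all_boot all_order all_algebra.
From mathcomp Require Import all_classical all_reals all_analysis.
From mathcomp Require Import ring lra measurable_realfun.
Import Order.TTheory GRing.Theory Num.Theory.
Import numFieldNormedType.Exports.
Local Open Scope classical_set_scope.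
Local Open Scope ring_scope.

(* Write g for dP/dQ, a := f'(1) and b := f'(gamma).  Convexity puts f above
   its tangents at 1 and at gamma, so pointwise
     f(g x) >= a (g x - 1) + [x \in E] (b - a) (g x - gamma),
   where for g x <= 0 one uses f(0+) >= -a, the tangent at 1 evaluated at 0.
   Integrating against Q kills the first term (the density has mass 1) and
   turns the second into (b - a) (P(E) - gamma Q(E)) at least, whence
   D_f(P || Q) >= (b - a) (P(E) - gamma Q(E)).  Since the Radon-Nikodym
   density is only a.e. nonnegative, the argument runs with its positive
   part. *)

Section convex_tangent.
Context {R : realType} {f : R -> R}.
Hypothesis cvxf : convex_function (`]0, +oo[%classic : set R) f.

Lemma convex_pos_le {x y h} : 0 < x -> 0 < y -> 0 <= h -> h <= 1 ->
  f (h * x + (1 - h) * y) <= h * f x + (1 - h) * f y.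
Proof.
move=> x0 y0 h0 h1; have := cvxf (Itv01 h0 h1) x y.
by rewrite !inE /= !in_itv /= !andbT !convRE; apply.
Qed.

Lemma convex_tangent_le {x0 t} : 0 < x0 -> 0 < t -> derivable f x0 1 ->
  f x0 + derive1 f x0 * (t - x0) <= f t.
Proof.
move=> x00 t0 dfx0; set v := t - x0.
have dv : derivable f x0 v by exact/diff_derivable/derivable1_diffP.
have -> : derive1 f x0 * v = 'D_v f x0.
  by rewrite deriveE ?diff1E 1?mulrC //; exact/derivable1_diffP.
rewrite -lerBrDl /derive cvg_at_rightE //.
apply: limr_le.
  by apply/cvg_ex; eexists; apply: cvg_dnbhs_at_right; exact: dv.
near=> h; have h0 : 0 < h by near: h; exact: nbhs_right_gt.
have h1 : h < 1 by near: h; exact: nbhs_right_lt.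
have := convex_pos_le t0 x00 (ltW h0) (ltW h1).
have -> : h * t + (1 - h) * x0 = h *: v + x0 by rewrite /v /GRing.scale /=; lra.
move=> cvx; rewrite /= /shift -[leRHS](mulKf (lt0r_neq0 h0)).
by rewrite ler_pM2l ?invr_gt0 //; lra.
Unshelve. all: by end_near. Qed.

(* Above the tangent at x0, f - tangent is nonnegative and nonincreasing on
   ]0, x0], so it has a nonnegative limit at 0+. *)
Lemma convex_tangent_le_at0 {x0} : 0 < x0 -> derivable f x0 1 ->
  ((f x0 - derive1 f x0 * x0)%:E <= f_at0 f)%E.
Proof.
move=> x00 dfx0; set a := derive1 f x0.
pose phi t := f t - (f x0 + a * (t - x0)).
have phi_ge0 t : 0 < t -> 0 <= phi t.
  by move=> t0; rewrite subr_ge0 convex_tangent_le.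
have phi_ni : {in Interval (BRight 0) (BLeft x0) &,
    nonincreasing_fun (fun t => (phi t)%:E)}.
  move=> s u; rewrite !in_itv/= => /andP[s0 sx0] /andP[u0 ux0] su.
  rewrite lee_fin; have [->//|neq_su] := eqVneq s u.
  have {neq_su}su : s < u by rewrite lt_neqAle neq_su su.
  pose lam := (x0 - u) / (x0 - s).
  have xs0 : 0 < x0 - s by rewrite subr_gt0.
  have lam0 : 0 <= lam by rewrite divr_ge0 // subr_ge0 ltW.
  have lam1 : lam <= 1 by rewrite ler_pdivrMr // mul1r; lra.
  have ulam : u = lam * s + (1 - lam) * x0 by rewrite /lam; field; lra.
  have := convex_pos_le s0 x00 lam0 lam1; rewrite -ulam => fu.
  have := phi_ge0 s s0; rewrite /phi.
  have -> : u - x0 = lam * (s - x0) by rewrite ulam; ring.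
  nra.
have := @nonincreasing_at_right_cvge R (fun t => (phi t)%:E) 0 (BLeft x0)
  x00 phi_ni.
set l := ereal_sup _ => phi_l.
have l_ge0 : (0 <= l)%E.
  apply: (cvge_to_ge phi_l); near=> t; rewrite lee_fin; apply: phi_ge0.
  by near: t; exact: nbhs_right_gt.
have tangent_cvg : (f x0 + a * (t - x0))%:E @[t --> 0^'+] -->
    (f x0 - a * x0)%:E.
  apply: cvg_EFin; first by near=> t.
  apply: cvg_at_right_filter.
  have -> : f x0 - a * x0 = f x0 + a * (0 - x0) by ring.
  apply: cvgD; first exact: cvg_cst.
  apply: cvgM; first exact: cvg_cst.
  by apply: cvgB; [exact: cvg_id | exact: cvg_cst].
have -> : f_at0 f = (l + (f x0 - a * x0)%:E)%E.
  apply: cvg_lim => //; apply: cvg_trans (cvgeD _ phi_l tangent_cvg).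
    by apply: near_eq_cvg; near=> t; rewrite /phi /= -EFinD subrK.
  exact: fin_num_adde_defl.
by rewrite leeDr.
Unshelve. all: by end_near. Qed.

End convex_tangent.

Section le_integral_nonmeasurable.
Local Open Scope ereal_scope.
Context {d} {T : measurableType d} {R : realType}
  (mu : {measure set T -> \bar R}).

(* Integrals of nonnegative functions are suprema over simple minorants, so
   monotonicity needs no measurability; this matters because f_ext f \o g is
   never shown to be measurable. *)
Lemma ge0_le_integral_nonmeasurable {f1 f2 : T -> \bar R} :
  (forall x, 0 <= f1 x) -> (forall x, f1 x <= f2 x) ->
  \int[mu]_x f1 x <= \int[mu]_x f2 x.
Proof.
move=> f10 f12; have f20 x := le_trans (f10 x) (f12 x).
rewrite !ge0_integralTE //; apply: ereal_sup_le => _ [h hf1 <-].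
by exists h => //= x; exact: le_trans (hf1 x) (f12 x).
Qed.

Lemma le_integral_nonmeasurable {f1 f2 : T -> \bar R} :
  (forall x, f1 x <= f2 x) -> \int[mu]_x f1 x <= \int[mu]_x f2 x.
Proof.
move=> f12; rewrite (integralE _ _ f1) (integralE _ _ f2).
apply: leeB; apply: ge0_le_integral_nonmeasurable => x.
- exact: funepos_ge0.
- by rewrite !funeposE le_max2.
- exact: funeneg_ge0.
- by rewrite !funenegE le_max2 // leeN2.
Qed.

End le_integral_nonmeasurable.

Section Radon_Nikodym_funepos.
Local Open Scope ereal_scope.
Local Open Scope charge_scope.
Context {d} {T : measurableType d} {R : realType}
  {P : {finite_measure set T -> \bar R}}
  {Q : {sigma_finite_measure set T -> \bar R}}.
Hypothesis PQ : P `<< Q.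
Let g := 'd (charge_of_finite_measure P) '/d Q.

Let PQc : charge_of_finite_measure P `<< Q := PQ.

Let gint : Q.-integrable setT g := Radon_Nikodym_integrable PQc.

Lemma integral_Radon_Nikodym_funepos A : measurable A ->
  \int[Q]_(x in A) g^\+ x = P A + \int[Q]_(x in A) g^\- x.
Proof.
move=> mA; have -> : P A = \int[Q]_(x in A) g x.
  exact: (Radon_Nikodym_integral PQc mA).
rewrite (integralE _ _ g) subeK // integrable_fin_num //.
exact/(integrableS measurableT)/integrable_funeneg.
Qed.

(* The density is nonnegative almost everywhere: on [g < 0] the identity above
   reads 0 = P [g < 0] + \int g^-, with both summands nonnegative. *)
Lemma integral_Radon_Nikodym_funeneg : \int[Q]_x g^\- x = 0.
Proof.
pose N := setT `&` [set x | g x < 0].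
have mN : measurable N.
  by apply: emeasurable_fun_infty_o => //; exact: measurable_int gint.
have -> : \int[Q]_x g^\- x = \int[Q]_(x in N) g^\- x.
  rewrite (integral_mkcond N); apply: eq_integral => x _.
  rewrite patchE; case: ifPn => // /negP xN; rewrite funenegE; apply/max_idPr.
  by rewrite leeNl oppe0 leNgt; apply/negP => gx; apply: xN; rewrite inE.
have := integral_Radon_Nikodym_funepos N mN.
rewrite integral0_eq => [eqN|x [_ /= gx]]; last first.
  by rewrite funeposE; apply/max_idPr/ltW.
apply/eqP; rewrite eq_le integral_ge0 ?andbT => [|x _]; last exact: funeneg_ge0.
by rewrite eqN leeDr.
Qed.

Lemma integral_Radon_Nikodym_funeposT : \int[Q]_x g^\+ x = P setT.
Proof.
rewrite integral_Radon_Nikodym_funepos //.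
by rewrite integral_Radon_Nikodym_funeneg adde0.
Qed.

Lemma le_integral_Radon_Nikodym_funepos A : measurable A ->
  P A <= \int[Q]_(x in A) g^\+ x.
Proof.
move=> mA; rewrite integral_Radon_Nikodym_funepos // leeDl //.
by apply: integral_ge0 => x _; exact: funeneg_ge0.
Qed.

End Radon_Nikodym_funepos.

Section two_tangent_minorant.
Context {R : realType} {f : R -> R} {gamma : R}.
Hypotheses (cvxf : convex_function (`]0, +oo[%classic : set R) f)
  (f1 : f 1 = 0) (gamma_gt1 : 1 < gamma)
  (df1 : derivable f 1 1) (dfgamma : derivable f gamma 1)
  (slope_le : derive1 f 1 <= derive1 f gamma).
Let a := derive1 f 1.
Let b := derive1 f gamma.
Local Open Scope ereal_scope.

Lemma two_tangent_minorant (r : R) (e : bool) :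
  a%:E * ((Num.max r 0)%:E - 1) +
    (if e then (b - a)%:E * ((Num.max r 0)%:E - gamma%:E) else 0)
  <= f_ext f r%:E.
Proof.
have gamma_gt0 : (0 < gamma)%R by exact: lt_trans gamma_gt1.
have tangent1 t : (0 < t -> a * (t - 1) <= f t)%R.
  by move=> t0; have := convex_tangent_le cvxf ltr01 t0 df1; rewrite f1 add0r.
have tangent_gamma t : (0 < t -> a * (t - 1) + (b - a) * (t - gamma) <= f t)%R.
  move=> t0; have := convex_tangent_le cvxf gamma_gt0 t0 dfgamma.
  by have := tangent1 _ gamma_gt0; rewrite -/b; lra.
have f0_ge : (- a)%:E <= f_at0 f.
  by have := convex_tangent_le_at0 cvxf ltr01 df1; rewrite f1 mulr1 sub0r.
rewrite /f_ext lte_fin; case: ltP => [r0|r0] /=.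
  case: e; rewrite ?adde0 -!EFinB -!EFinM ?EFinD lee_fin.
    exact: tangent_gamma.
  exact: tangent1.
apply: le_trans f0_ge.
have gap : (0 <= (b - a) * gamma)%R by rewrite mulr_ge0 ?subr_ge0 // ltW.
by case: e; rewrite ?adde0 -!EFinB -!EFinM ?EFinD lee_fin; lra.
Qed.

End two_tangent_minorant.

Section integral_two_tangent.
Local Open Scope ereal_scope.
Context {d} {T : measurableType d} {R : realType} (Q : probability T R).

Lemma integral_two_tangent (G : T -> \bar R) (E : set T) (a c gamma : R) :
  measurable E -> Q.-integrable setT G -> \int[Q]_x G x = 1 ->
  \int[Q]_x (a%:E * (G x - 1) + ((fun y => c%:E * (G y - gamma%:E)) \_ E) x)
  = c%:E * (\int[Q]_(x in E) G x - gamma%:E * Q E).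
Proof.
move=> mE Gint intG1.
have cst_int A (k : R) : measurable A -> Q.-integrable A (cst k%:E).
  move=> mA; apply: (integrableS measurableT) => //.
  exact: finite_measure_integrable_cst.
have GEint : Q.-integrable E G by exact: (integrableS measurableT).
rewrite integralD //; last 2 first.
- by apply: integrableZl => //; apply: integrableB => //; exact: cst_int.
- rewrite -integrable_mkcond //; apply: integrableZl => //.
  by apply: integrableB => //; exact: cst_int.
rewrite integralZl //; last by apply: integrableB => //; exact: cst_int.
rewrite integralB //; last exact: cst_int.
rewrite intG1 integral_cst // [X in (1 * X)%E](_ : _ = 1); last first.
  exact: probability_setT.
rewrite mule1 subee // mule0.
rewrite add0e -integral_mkcond integralZl //; last first.
  by apply: integrableB => //; exact: cst_int.
by rewrite integralB ?integral_cst //; exact: cst_int.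
Qed.

End integral_two_tangent.

Lemma lee_add_div_of_le {R : realType} {c gamma : R} {p i q D : \bar R} :
  0 < c -> (p <= i)%E -> (c%:E * (i - gamma%:E * q) <= D)%E ->
  q \is a fin_num -> i \is a fin_num ->
  (p <= gamma%:E * q + D * (c^-1)%:E)%E.
Proof.
move=> c0 + + qfin ifin; rewrite -(fineK qfin) -(fineK ifin).
case: p => [p| //|_ _]; last by rewrite leNye.
rewrite lee_fin -EFinM => pi; case: D => [D| _|].
- rewrite -!EFinM -EFinD !lee_fin -ler_pdivlMl // => cD.
  by rewrite mulrC; lra.
- by rewrite gt0_mulye ?lte_fin ?invr_gt0 // addey // leey.
- by rewrite leeNy_eq.
Qed.

Theorem mainTheorem7 (d : measure_display) (T : measurableType d) (R : realType)
  (P Q : probability T R) (gamma : R) (f : R -> R) :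
  P `<< Q ->
  1 < gamma ->
  convex_function (`]0, +oo[%classic : set R) f ->
  f 1 = 0 ->
  derivable f 1 1 ->
  derivable f gamma 1 ->
  derive1 f 1 < derive1 f gamma ->
  forall E, measurable E ->
  (P E <= gamma%:E * Q E
          + f_divergence f P Q * ((derive1 f gamma - derive1 f 1)^-1)%:E)%E.
Proof.
move=> PQ gamma_gt1 cvxf f1 df1 dfgamma slope_lt E mE.
have PQc : charge_of_finite_measure P `<< Q := PQ.
rewrite /f_divergence; set g := Radon_Nikodym _ _.
have gint : Q.-integrable setT g := Radon_Nikodym_integrable PQc.
have gfin x : g x \is a fin_num := Radon_Nikodym_fin_num x PQc.
pose a := derive1 f 1; pose c := derive1 f gamma - a.
have minorant x : (a%:E * (g^\+ x - 1) +
    ((fun y => c%:E * (g^\+ y - gamma%:E)) \_ E) x <= f_ext f (g x))%E.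
  rewrite patchE funeposE -(fineK (gfin x)) -EFin_max.
  exact: two_tangent_minorant cvxf f1 gamma_gt1 df1 dfgamma (ltW slope_lt) _ _.
have lower := le_integral_nonmeasurable Q minorant.
rewrite integral_two_tangent // in lower; last first.
- by rewrite integral_Radon_Nikodym_funeposT //; exact: probability_setT.
- exact: integrable_funepos.
apply: (lee_add_div_of_le _ (le_integral_Radon_Nikodym_funepos PQ E mE) lower).
- by rewrite subr_gt0.
- exact: fin_num_measure.
- apply: integrable_fin_num => //; apply: (integrableS measurableT) => //.
  exact: integrable_funepos.
Qed.
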